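(* For every integer $n\ge1$, \[ \frac{1}{n+1}\sum_{j=0}^{n}\sum_{i=0}^{j}\frac{\binom{3n+2}{i}}{\binom{2n+1}{j}}=2^{n}\left(\frac34+\sum_{k=1}^{n-1}\frac{1}{2^{k}k}\left(1-\frac{5k+12}{8k+12}\,\frac{\binom{3k+2}{k}}{\binom{2k+1}{k}}\right)\right). \]
   Context: Empty sums are $0$. *)

From HB Require Import structures.
From mathcomp Require Import all_boot all_order all_algebra.

From HB Require Import structures.
From mathcomp Require Import all_boot all_order all_algebra.
From mathcomp Require Import zify ring lra.
Import Order.TTheory GRing.Theory Num.Theory.
Local Open Scope ring_scope.

(** Write [P_N(j) = sum_(i <= j) C(N, i)] and [D(N, m, n) = sum_(j <= n) P_N(j) / C(m, j)],
    so that the left-hand side is [D(3n+2, 2n+1, n) / (n+1)].  Pascal's rule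
    [P_(N+1)(j) = 2 P_N(j) - C(N, j)] and the reciprocal identity
    [1/C(m, j) = (m+1)/(m+2) (1/C(m+1, j) + 1/C(m+1, j+1))] move [D] from [(N, m)] to
    [(N+1, m+1)], or from [N] to [N+1], at the cost of explicit boundary terms and of
    [sum_(j < t) C(N, j) / C(m, j)], which telescopes to a closed form.  Three such moves
    take [(3n+2, 2n+1)] to [(3n+5, 2n+3)] and give the recurrence
    [a_(n+1) = 2 a_n + (2/n) delta_n] for the left-hand side [a_n], where [delta_n] is the
    factor [1 - ...] of the [k = n] summand; the right-hand side is its solution with
    [a_1 = 3/2]. *)

Lemma natr_fact_neq0 (R : numDomainType) k : (k`!%:R : R) != 0.
Proof. by rewrite pnatr_eq0 -lt0n fact_gt0. Qed.

Lemma natr_bin_neq0 (R : numDomainType) m j : (j <= m)%N -> ('C(m, j)%:R : R) != 0.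
Proof. by move=> hj; rewrite pnatr_eq0 -lt0n bin_gt0. Qed.

Ltac field_nonzero :=
  repeat (apply/andP; split); try (apply: natr_bin_neq0; lia); try (apply: lt0r_neq0; lra).

Section NatCastBinomial.

Context {R : numFieldType}.

Lemma natr_eq_div x p q : (x * p)%N = q -> (0 < p)%N -> (x%:R : R) = q%:R / p%:R.
Proof.
move=> <- hp; rewrite natrM mulfK // pnatr_eq0 -lt0n //.
Qed.

Lemma natr_bin_fact k l : ('C(k + l, k)%:R : R) = (k + l)`!%:R / (k`!%:R * l`!%:R).
Proof.
rewrite -natrM; apply: natr_eq_div; last by rewrite muln_gt0 !fact_gt0.
by rewrite -{2}(addKn k l) bin_fact ?leq_addr.
Qed.

Lemma natr_binS_down m j : (j <= m)%N ->
  ('C(m.+1, j)%:R : R) = m.+1%:R * 'C(m, j)%:R / (m.+1%:R - j%:R).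
Proof.
move=> hj; rewrite -natrB -?natrM; last by lia.
by apply: natr_eq_div; [rewrite mulnC (mul_bin_down m.+1 j) | lia].
Qed.

Lemma natr_binSS m j : ('C(m.+1, j.+1)%:R : R) = m.+1%:R * 'C(m, j)%:R / j.+1%:R.
Proof. by rewrite -natrM; apply: natr_eq_div => //; rewrite mulnC -(mul_bin_diag m.+1 j). Qed.

Lemma natr_bin_left m j : (j < m)%N ->
  ('C(m, j)%:R : R) = j.+1%:R * 'C(m, j.+1)%:R / (m%:R - j%:R).
Proof.
move=> hj; rewrite -natrB -?natrM; last by lia.
by apply: natr_eq_div; [rewrite mulnC mul_bin_left | lia].
Qed.

End NatCastBinomial.

Section BinomialRatioSums.

Variable R : realFieldType.
Implicit Types (N m n j k l t u : nat).

Definition bin_psum N j : R := \sum_(0 <= i < j.+1) 'C(N, i)%:R.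

Definition bin_ratio_sum N m n : R := \sum_(0 <= j < n.+1) bin_psum N j / 'C(m, j)%:R.

Definition bin_quot_sum N m t : R := \sum_(0 <= j < t) 'C(N, j)%:R / 'C(m, j)%:R.

Lemma bin_ratio_sumE N m n : bin_ratio_sum N m n
  = \sum_(0 <= j < n.+1) \sum_(0 <= i < j.+1) 'C(N, i)%:R / 'C(m, j)%:R.
Proof. by apply: eq_bigr => j _; rewrite mulr_suml. Qed.

Lemma bin_psum0 N : bin_psum N 0 = 1.
Proof. by rewrite /bin_psum big_nat1 bin0. Qed.

Lemma bin_psumS N j : bin_psum N j.+1 = bin_psum N j + 'C(N, j.+1)%:R.
Proof. by rewrite /bin_psum big_nat_recr. Qed.

Lemma bin_psum_rowS N j : bin_psum N.+1 j = 2 * bin_psum N j - 'C(N, j)%:R.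
Proof.
elim: j => [|j IHj]; first by rewrite !bin_psum0 bin0; ring.
by rewrite !bin_psumS IHj binS natrD; ring.
Qed.

Lemma bin_ratio_sum0 N m : bin_ratio_sum N m 0 = 1.
Proof. by rewrite /bin_ratio_sum big_nat1 bin_psum0 bin0 divr1. Qed.

Lemma bin_ratio_sumS N m n :
  bin_ratio_sum N m n.+1 = bin_ratio_sum N m n + bin_psum N n.+1 / 'C(m, n.+1)%:R.
Proof. by rewrite /bin_ratio_sum big_nat_recr. Qed.

Lemma bin_ratio_sum_rowS N m n :
  bin_ratio_sum N.+1 m n = 2 * bin_ratio_sum N m n - bin_quot_sum N m n.+1.
Proof.
elim: n => [|n IHn]; first by rewrite !bin_ratio_sum0 /bin_quot_sum big_nat1 !bin0; field.
by rewrite !bin_ratio_sumS IHn /bin_quot_sum [in RHS]big_nat_recr //= bin_psum_rowS; ring.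
Qed.

Lemma binV_pascal m j : (j <= m)%N ->
  'C(m, j)%:R^-1 = m.+1%:R / m.+2%:R * ('C(m.+1, j)%:R^-1 + 'C(m.+1, j.+1)%:R^-1) :> R.
Proof.
move=> hj; have Cmj_neq0 : ('C(m, j)%:R : R) != 0 by exact: natr_bin_neq0.
rewrite natr_binS_down // natr_binSS.
have : (j%:R : R) <= m%:R by rewrite ler_nat.
have := ler0n R j; have := ler0n R m.
by move=> *; field; field_nonzero.
Qed.

Lemma bin_ratio_sumSS N m n : (n <= m)%N ->
  bin_ratio_sum N.+1 m.+1 n
  = m.+2%:R / m.+1%:R * bin_ratio_sum N m n - bin_psum N n / 'C(m.+1, n.+1)%:R.
Proof.
have := ler0n R m => m_ge0.
elim: n => [|n IHn] hn.
  by rewrite !bin_ratio_sum0 bin_psum0 bin1; field; field_nonzero.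
rewrite !bin_ratio_sumS IHn 1?ltnW // bin_psum_rowS bin_psumS (binV_pascal m n.+1 hn).
by field; field_nonzero.
Qed.

Lemma bin_quot_telescope t u l :
  'C((t + u + l).+2, t)%:R / 'C(t + u, t)%:R
  = 'C((t + u + l).+2, t + u)%:R * l.+2%:R / l.+1%:R
    * ('C((u + l).+1, l.+1)%:R^-1 - 'C((u + l).+2, l.+1)%:R^-1) :> R.
Proof.
have -> : (t + u + l).+2 = (t + (u + l).+2)%N by lia.
have -> : 'C(t + (u + l).+2, t + u) = 'C((t + u) + l.+2, t + u) by congr binomial; lia.
have -> : 'C((u + l).+1, l.+1) = 'C(l.+1 + u, l.+1) by congr binomial; lia.
have -> : 'C((u + l).+2, l.+1) = 'C(l.+1 + u.+1, l.+1) by congr binomial; lia.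
rewrite !natr_bin_fact.
have -> : (t + u + l.+2 = t + (u + l).+2)%N by lia.
have -> : (l.+1 + u.+1 = (u + l).+2)%N by lia.
have -> : (l.+1 + u = (u + l).+1)%N by lia.
rewrite !factS !natrM.
have := natr_fact_neq0 R (t + (u + l).+2); have := natr_fact_neq0 R t.
have := natr_fact_neq0 R (t + u); have := natr_fact_neq0 R u.
have := natr_fact_neq0 R (u + l); have := natr_fact_neq0 R l.
have := ler0n R u; have := ler0n R l; have := ler0n R t.
by move=> *; field; field_nonzero.
Qed.

Lemma bin_quot_sum_closed N m l t : N = (m + l).+2 -> (t <= m.+1)%N ->
  bin_quot_sum N m t
  = 'C(N, m)%:R * l.+2%:R / l.+1%:R * ('C(N - t, l.+1)%:R^-1 - 'C(N, l.+1)%:R^-1).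
Proof.
move=> -> {N}; elim: t => [|t IHt] ht.
  by rewrite /bin_quot_sum big_geq // subn0 subrr mulr0.
rewrite /bin_quot_sum big_nat_recr //= -/(bin_quot_sum _ _ _) IHt 1?ltnW //.
have [u ->] : exists u, m = (t + u)%N by exists (m - t)%N; lia.
rewrite bin_quot_telescope.
have -> : ((t + u + l).+2 - t = (u + l).+2)%N by lia.
have -> : ((t + u + l).+2 - t.+1 = (u + l).+1)%N by lia.
ring.
Qed.

Definition ratio_mean n : R := n.+1%:R^-1 * bin_ratio_sum (3 * n + 2) (2 * n + 1) n.

Definition ratio_defect k : R :=
  1 - (5 * k + 12)%:R / (8 * k + 12)%:R * ('C(3 * k + 2, k)%:R / 'C(2 * k + 1, k)%:R).

Lemma ratio_mean_rec n : (1 <= n)%N ->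
  ratio_mean n.+1 = 2 * ratio_mean n + 2 / n%:R * ratio_defect n.
Proof.
move=> hn; rewrite /ratio_mean /ratio_defect.
have -> : (3 * n.+1 + 2 = (3 * n + 2).+3)%N by lia.
have -> : (2 * n.+1 + 1 = (2 * n + 1).+2)%N by lia.
set N := (3 * n + 2)%N; set m := (2 * n + 1)%N.
have quot := @bin_quot_sum_closed N.+2 m.+2 n.-1 n.+1.
rewrite prednK // in quot.
rewrite bin_ratio_sumS bin_ratio_sum_rowS quot; try by rewrite /N /m; lia.
rewrite bin_ratio_sumSS ?bin_ratio_sumSS //; try by rewrite /N /m; lia.
rewrite bin_psumS !bin_psum_rowS.
have -> : (N.+2 - n.+1 = m.+2)%N by rewrite /N /m; lia.
have -> : 'C(N.+2, m.+2) = 'C(N.+2, n.+1).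
  by rewrite -bin_sub /N /m; [congr binomial|]; lia.
rewrite (natr_bin_left m.+2 n); last by rewrite /m; lia.
rewrite (natr_binSS N.+2 n) (natr_binSS N.+1 n) (natr_binS_down N.+1 n); last by rewrite /N; lia.
rewrite (natr_binS_down N n) ?(natr_binS_down m.+1 n.+1); try by rewrite /N /m; lia.
rewrite (natr_binSS m n).
have n_ge1 : (1 : R) <= n%:R by rewrite ler1n.
rewrite /N /m.
by field; field_nonzero.
Qed.

End BinomialRatioSums.

Theorem mainTheorem10 (n : nat) (hn : (1 <= n)%N) :
  (n.+1%:R)^-1 *
    (\sum_(0 <= j < n.+1) \sum_(0 <= i < j.+1)
        ('C(3 * n + 2, i))%:R / ('C(2 * n + 1, j))%:R : rat)
  = 2 ^+ n *
    (3 / 4 + \sum_(1 <= k < n)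
        ((2 ^+ k * k%:R)^-1 *
          (1 - ((5 * k + 12)%:R / (8 * k + 12)%:R) *
               (('C(3 * k + 2, k))%:R / ('C(2 * k + 1, k))%:R)))).
Proof.
rewrite -bin_ratio_sumE -/(ratio_mean _ n).
elim: n hn => [//|[|n] IHn] _.
  rewrite big_geq // /ratio_mean bin_ratio_sumS bin_ratio_sum0 bin_psumS bin_psum0 !bin1.
  by field.
rewrite ratio_mean_rec // IHn // [in RHS]big_nat_recr //= /ratio_defect !exprS.
have n_ge0 := ler0n rat n.
by field; field_nonzero; rewrite expf_neq0.
Qed.
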